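(* Let $T$ be a finite tile set, let $c\in\mathbb{N}$, and let $\tau_1,\tau_2,\dots$ be an infinite sequence of nondecreasing temperature functions such that for each $i$ the size-dependent system $(T,\tau_i)$ self-assembles a $k_i\times h_i$ rectangle with $h_i\le c$, where the widths $k_i$ are pairwise distinct. Let $f(n)=\min_{i\in\mathbb{N}}\tau_i(n)$. Then $f$ is bounded: there is a constant $C$ (e.g. $C=(c+1)g_{\max}$, with $g_{\max}$ the maximum glue strength in $T$) such that $f(n)\le C$ for all $n\in\mathbb{N}$.
   Context: Size-dependent two-handed tile assembly model. A tile type is a quadruple $(g_N,g_E,g_S,g_W)$ of glues from an alphabet $\Sigma$, each glue $g$ having a non-negative integer strength $\mathrm{str}(g)$. A tile is a unit square centered at a point of $\mathbb{Z}^2$ labeled by a tile type; two tiles are adjacent if their centers are at distance 1. An assembly is a partial map $\alpha:\mathbb{Z}^2\to T$ with finite domain $\mathrm{dom}(\alpha)$. Two adjacent tiles form a bond if the glues on their abutting edges are equal and of positive strength; the strength of the bond is that glue's strength. The bond graph of $\alpha$ has vertex set $\mathrm{dom}(\alpha)$ and an edge for each bond. A cut of an assembly is an edge cut of its bond graph (a partition of $\mathrm{dom}(\alpha)$ into two nonempty parts), and its strength is the total strength of bonds crossing it. A supertile $\tilde\alpha$ is the equivalence class of an assembly under translation; its size $|\tilde\alpha|$ is the number of tiles of an assembly in it. A size-dependent system is a pair $(T,\tau)$ with $T$ a finite tile set and $\tau:\mathbb{N}\to\mathbb{N}$ a nondecreasing temperature function. An assembly $\gamma$ is $\tau$-stable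 if every cut partitioning $\mathrm{dom}(\gamma)$ into parts $\alpha,\beta$ has strength at least $\tau(\min(|\alpha|,|\beta|))$. Two supertiles $\tilde\alpha,\tilde\beta$ can combine into $\tilde\gamma$ if there are disjoint assemblies $\alpha\in\tilde\alpha$, $\beta\in\tilde\beta$ with $\alpha\cup\beta=\gamma\in\tilde\gamma$ and the cut separating $\mathrm{dom}(\alpha)$ from $\mathrm{dom}(\beta)$ has strength at least $\tau(\min(|\alpha|,|\beta|))$. A supertile $\tilde\gamma$ can break into $\tilde\alpha,\tilde\beta$ if there are disjoint assemblies $\alpha\in\tilde\alpha,\beta\in\tilde\beta$ with connected bond graphs, $\alpha\cup\beta=\gamma\in\tilde\gamma$, and the cut separating them has strength less than $\tau(\min(|\alpha|,|\beta|))$. A supertile is producible if it is a single tile of a type in $T$, a combination of two producible supertiles, or a result of a break of a producible supertile. A producible supertile is terminal if it can combine with no producible supertile and cannot break. The system self-assembles a shape $P\subseteq\mathbb{Z}^2$ if every terminal supertile has an assembly whose domain is exactly $P$, and at least one terminal supertile exists. A $w\times h$ rectangle is a set $\{x+1,\dots,x+w\}\times\{y+1,\dots,y+h\}$ for some integers $x,y$. *)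

From Stdlib Require Import ZArith Arith List Relations Bool.
Import ListNotations.
Open Scope Z_scope.
Open Scope bool_scope.

(* Glues are labelled by natural numbers; a strength function str : nat -> nat
   assigns each glue its (non-negative integer) strength. *)
Record tiletype := mkTile { gN : nat; gE : nat; gS : nat; gW : nat }.

Definition pos := (Z * Z)%type.

(* An assembly: a partial map Z^2 -> tile types (finiteness of the domain is
   imposed where needed via [dom_list]). *)
Definition assembly := pos -> option tiletype.

Definition pos_eqb (p q : pos) : bool := Z.eqb (fst p) (fst q) && Z.eqb (snd p) (snd q).

Definition dom_list (a : assembly) (D : list pos) : Prop :=
  NoDup D /\ forall p, In p D <-> a p <> None.

Definition edge_str (str : nat -> nat) (a : assembly) (p q : pos) : nat :=
  match a p, a q with
  | Some t, Some u =>
      if Z.eqb (fst q) (fst p + 1) && Z.eqb (snd q) (snd p) then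
        (if Nat.eqb (gE t) (gW u) then str (gE t) else 0%nat)
      else if Z.eqb (fst q) (fst p) && Z.eqb (snd q) (snd p + 1) then
        (if Nat.eqb (gN t) (gS u) then str (gN t) else 0%nat)
      else 0%nat
  | _, _ => 0%nat
  end.

Definition bond_str (str : nat -> nat) (a : assembly) (p q : pos) : nat :=
  (edge_str str a p q + edge_str str a q p)%nat.

Definition bonded (str : nat -> nat) (a : assembly) (p q : pos) : Prop :=
  (0 < bond_str str a p q)%nat.

Definition connected (str : nat -> nat) (a : assembly) : Prop :=
  forall p q, a p <> None -> a q <> None ->
    clos_refl_trans pos (bonded str a) p q.

Definition cut_str (str : nat -> nat) (g : assembly) (Da Db : list pos) : nat :=
  list_sum (map (fun p => list_sum (map (fun q => bond_str str g p q) Db)) Da).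

Definition disjoint (a b : assembly) : Prop := forall p, a p = None \/ b p = None.

Definition is_union (a b g : assembly) : Prop :=
  forall p, g p = match a p with Some t => Some t | None => b p end.

Definition translate (a : assembly) (v : pos) (b : assembly) : Prop :=
  forall p, b p = a (fst p - fst v, snd p - snd v).

Definition can_combine (str : nat -> nat) (tau : nat -> nat)
  (alpha beta gamma : assembly) : Prop :=
  disjoint alpha beta /\ is_union alpha beta gamma /\
  exists Da Db, dom_list alpha Da /\ dom_list beta Db /\
    (tau (Nat.min (length Da) (length Db)) <= cut_str str gamma Da Db)%nat.

Definition can_break (str : nat -> nat) (tau : nat -> nat)
  (gamma alpha beta : assembly) : Prop :=
  disjoint alpha beta /\ is_union alpha beta gamma /\
  connected str alpha /\ connected str beta /\
  exists Da Db, dom_list alpha Da /\ dom_list beta Db /\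
    Da <> [] /\ Db <> [] /\
    (cut_str str gamma Da Db < tau (Nat.min (length Da) (length Db)))%nat.

(* producible assemblies: the set of all assemblies of producible supertiles
   (closed under translation, i.e. a union of translation classes) *)
Inductive producible (str : nat -> nat) (T : list tiletype) (tau : nat -> nat)
  : assembly -> Prop :=
| P_tile : forall t p0 a, In t T ->
    (forall p, a p = if pos_eqb p p0 then Some t else None) ->
    producible str T tau a
| P_trans : forall a v b, producible str T tau a -> translate a v b ->
    producible str T tau b
| P_combine : forall a b g, producible str T tau a -> producible str T tau b ->
    can_combine str tau a b g -> producible str T tau g
| P_break_l : forall g a b, producible str T tau g -> can_break str tau g a b ->
    producible str T tau a
| P_break_r : forall g a b, producible str T tau g -> can_break str tau g a b ->
    producible str T tau b.

Definition terminal (str : nat -> nat) (T : list tiletype) (tau : nat -> nat)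
  (g : assembly) : Prop :=
  producible str T tau g /\
  (forall v a, translate g v a ->
     forall b, producible str T tau b -> forall g', ~ can_combine str tau a b g') /\
  (forall v g', translate g v g' -> forall a b, ~ can_break str tau g' a b).

Definition self_assembles (str : nat -> nat) (T : list tiletype) (tau : nat -> nat)
  (P : pos -> Prop) : Prop :=
  (forall g, terminal str T tau g ->
     exists v g', translate g v g' /\ forall p, g' p <> None <-> P p) /\
  (exists g, terminal str T tau g).

Definition rect (x y : Z) (w h : nat) (p : pos) : Prop :=
  x + 1 <= fst p <= x + Z.of_nat w /\ y + 1 <= snd p <= y + Z.of_nat h.

Definition self_assembles_rect (str : nat -> nat) (T : list tiletype)
  (tau : nat -> nat) (w h : nat) : Prop :=
  exists x y, self_assembles str T tau (rect x y w h).

Definition nondecreasing (f : nat -> nat) : Prop :=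
  forall m n, (m <= n)%nat -> (f m <= f n)%nat.

Definition is_min_value (g : nat -> nat) (m : nat) : Prop :=
  (exists i, g i = m) /\ forall i, (m <= g i)%nat.

(* Let [g] be the largest glue strength and suppose [tau_i(n) > 2 c g] for a
   rectangle of width at least [2n + 2].  Its terminal assembly is bond-connected
   (if [tau_i(1) = 0] a lone tile could attach).  Cut it after column [n + 1]: by
   pigeonhole the left block has a component [A] with more than [n] tiles, and the
   rest has a component [K] with more than [n] tiles; [K] meets its complement (which
   contains [A]) only through the at most [h_i <= c] bonds across the cut line, each
   of strength at most [2 g], so the assembly could break.  Distinct widths give such
   wide rectangles for every [n], hence [min_i tau_i(n) <= 2 c g]. *)

From Stdlib Require Import ZArith Arith List Relations Lia Bool FinFun Classical ClassicalEpsilon.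
Import ListNotations.
Local Open Scope nat_scope.

Lemma clos_rt_mono {A} (R R' : relation A) :
  (forall x y, R x y -> R' x y) ->
  forall x y, clos_refl_trans A R x y -> clos_refl_trans A R' x y.
Proof.
  intros HR x y H; induction H; eauto using rt_step, rt_refl, rt_trans.
Qed.

Lemma clos_rt_sym {A} (R : relation A) :
  (forall x y, R x y -> R y x) ->
  forall x y, clos_refl_trans A R x y -> clos_refl_trans A R y x.
Proof.
  intros HR x y H; induction H; eauto using rt_step, rt_refl, rt_trans.
Qed.

Lemma clos_rt_exit {A} (R : relation A) (P : A -> Prop) x y :
  clos_refl_trans A R x y -> P x -> ~ P y -> exists u w, P u /\ ~ P w /\ R u w.
Proof.
  intro H; apply clos_rt_rt1n in H; induction H as [| x z y Hxz _ IH]; intros Hx Hy.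
  - contradiction.
  - destruct (classic (P z)); [now apply IH | now exists x, z].
Qed.

Lemma pos_eq_dec (p q : pos) : {p = q} + {p <> q}.
Proof. unfold pos; decide equality; apply Z.eq_dec. Qed.

Lemma pos_eqb_eq (p q : pos) : pos_eqb p q = true <-> p = q.
Proof.
  destruct p as [a b], q as [c d]; unfold pos_eqb; simpl.
  rewrite andb_true_iff, !Z.eqb_eq; split; [intros [-> ->] | intros [= -> ->]]; auto.
Qed.

Definition east (p : pos) : pos := (fst p + 1, snd p)%Z.
Definition north (p : pos) : pos := (fst p, snd p + 1)%Z.

Lemma edge_str_adjacent str a p q :
  0 < edge_str str a p q -> q = east p \/ q = north p.
Proof.
  unfold edge_str, east, north; destruct (a p), (a q); try lia.
  destruct q as [q1 q2]; simpl.
  destruct (Z.eqb_spec q1 (fst p + 1)), (Z.eqb_spec q2 (snd p)); simpl;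
    [left; f_equal; lia | ..];
  destruct (Z.eqb_spec q1 (fst p)), (Z.eqb_spec q2 (snd p + 1)); simpl;
    try (right; f_equal; lia); lia.
Qed.

Lemma edge_str_dom str a p q :
  0 < edge_str str a p q -> a p <> None /\ a q <> None.
Proof. unfold edge_str; destruct (a p), (a q); intros; try lia; split; discriminate. Qed.

Lemma bond_str_ext str a b p q :
  a p = b p -> a q = b q -> bond_str str a p q = bond_str str b p q.
Proof. intros Hp Hq; unfold bond_str, edge_str; now rewrite Hp, Hq. Qed.

Lemma bonded_sym str a p q : bonded str a p q -> bonded str a q p.
Proof. unfold bonded, bond_str; lia. Qed.

Lemma bonded_edge str a p q :
  bonded str a p q -> 0 < edge_str str a p q \/ 0 < edge_str str a q p.
Proof. unfold bonded, bond_str; lia. Qed.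

Lemma bonded_dom str a p q : bonded str a p q -> a p <> None /\ a q <> None.
Proof.
  intros [H | H]%bonded_edge; apply edge_str_dom in H; tauto.
Qed.

Lemma bonded_cross str a p q X :
  bonded str a p q -> (fst p <= X < fst q)%Z -> fst p = X /\ q = east p.
Proof.
  unfold east, north.
  intros [H | H]%bonded_edge HX; apply edge_str_adjacent in H;
    destruct H as [-> | ->]; simpl in *; split; auto; lia.
Qed.

Definition pos_sub (p v : pos) : pos := (fst p - fst v, snd p - snd v)%Z.
Definition pos_add (p v : pos) : pos := (fst p + fst v, snd p + snd v)%Z.

Lemma pos_sub_add p v : pos_sub (pos_add p v) v = p.
Proof. destruct p, v; unfold pos_sub, pos_add; simpl; f_equal; lia. Qed.

Lemma pos_add_sub p v : pos_add (pos_sub p v) v = p.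
Proof. destruct p, v; unfold pos_sub, pos_add; simpl; f_equal; lia. Qed.

Lemma edge_str_translate str a v b p q : translate a v b ->
  edge_str str b p q = edge_str str a (pos_sub p v) (pos_sub q v).
Proof.
  intro Hv; unfold edge_str, pos_sub; rewrite !Hv; simpl.
  destruct (a (fst p - fst v, snd p - snd v)%Z), (a (fst q - fst v, snd q - snd v)%Z); auto.
  destruct (Z.eqb_spec (fst q) (fst p + 1)), (Z.eqb_spec (snd q) (snd p));
  destruct (Z.eqb_spec (fst q - fst v) (fst p - fst v + 1)),
           (Z.eqb_spec (snd q - snd v) (snd p - snd v)); simpl; try lia;
  destruct (Z.eqb_spec (fst q) (fst p)), (Z.eqb_spec (snd q) (snd p + 1));
  destruct (Z.eqb_spec (fst q - fst v) (fst p - fst v)),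
           (Z.eqb_spec (snd q - snd v) (snd p - snd v + 1)); simpl; lia.
Qed.

Lemma bonded_translate str a v b p q : translate a v b ->
  bonded str b p q <-> bonded str a (pos_sub p v) (pos_sub q v).
Proof.
  intro Hv; unfold bonded, bond_str; now rewrite !(edge_str_translate str a v b).
Qed.

Lemma connected_translate str a v b :
  translate a v b -> connected str a -> connected str b.
Proof.
  intros Hv Ha p q Hp Hq; rewrite Hv in Hp, Hq.
  rewrite <- (pos_add_sub p v), <- (pos_add_sub q v).
  induction (Ha (pos_sub p v) (pos_sub q v) Hp Hq); eauto using rt_refl, rt_trans.
  apply rt_step; apply (bonded_translate str a v b); auto.
  now rewrite !pos_sub_add.
Qed.

Lemma translate_zero a : translate a (0, 0)%Z a.
Proof. intros [p1 p2]; simpl; f_equal; f_equal; lia. Qed.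

Lemma translate_compose a v b u c :
  translate a v b -> translate b u c -> translate a (pos_add v u) c.
Proof.
  intros Hv Hu p; rewrite Hu, Hv; unfold pos_add; simpl; f_equal; f_equal; lia.
Qed.

Lemma translate_add a v b p : translate a v b -> b (pos_add p v) = a p.
Proof. intro Hv; rewrite Hv; fold (pos_sub (pos_add p v) v); now rewrite pos_sub_add. Qed.

Lemma list_sum_le_support {A} (eq_dec : forall x y : A, {x = y} + {x <> y})
    (f : A -> nat) (l W : list A) (M : nat) :
  NoDup l -> (forall x, In x l -> f x <= M) ->
  (forall x, In x l -> f x <> 0 -> In x W) ->
  list_sum (map f l) <= length W * M.
Proof.
  revert W; induction l as [| a l IH]; intros W Hl Hbound Hsupp; simpl; [lia |].
  inversion Hl as [| ? ? Ha Hl']; subst.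
  destruct (Nat.eq_dec (f a) 0) as [E | E].
  - rewrite E; apply IH; auto with datatypes.
  - assert (HaW : In a W) by auto with datatypes.
    pose proof (remove_length_lt eq_dec W a HaW).
    assert (list_sum (map f l) <= length (remove eq_dec a W) * M).
    { apply IH; auto with datatypes.
      intros x Hx Hfx; apply in_in_remove; [congruence | auto with datatypes]. }
    assert (f a <= M) by auto with datatypes.
    nia.
Qed.

Lemma list_sum_pos {A} (f : A -> nat) l :
  0 < list_sum (map f l) -> exists x, In x l /\ 0 < f x.
Proof.
  induction l as [| a l IH]; simpl; intros H; [lia |].
  destruct (Nat.eq_dec (f a) 0).
  - destruct IH as (x & ? & ?); [lia | eauto].
  - exists a; split; auto; lia.
Qed.

Lemma pigeonhole {A} (C W : list A) (F : A -> list A) (m : nat) :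
  NoDup C -> (forall s, In s C -> exists w, In w W /\ In s (F w)) ->
  length W * m < length C -> exists w, In w W /\ m < length (F w).
Proof.
  intros HC Hcover Hlen; apply NNPP; intro Hsmall.
  assert (Hle : forall w, In w W -> length (F w) <= m).
  { intros w Hw; apply Nat.nlt_ge; intro; apply Hsmall; eauto. }
  assert (Hincl : incl C (flat_map F W)).
  { intros s Hs; destruct (Hcover s Hs) as (w & ? & ?); apply in_flat_map; eauto. }
  assert (length (flat_map F W) <= length W * m).
  { clear - Hle; induction W as [| w W IH]; simpl; auto.
    rewrite length_app; pose proof (Hle w (or_introl eq_refl)).
    enough (length (flat_map F W) <= length W * m) by lia.
    apply IH; intros; apply Hle; auto with datatypes. }
  pose proof (NoDup_incl_length HC Hincl); lia.
Qed.

Lemma injective_unbounded (k : nat -> nat) :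
  (forall i j, i <> j -> k i <> k j) -> forall M, exists i, M <= k i.
Proof.
  intros Hk M; apply NNPP; intro Hbounded.
  assert (Hinj : NoDup (map k (seq 0 (S M)))).
  { apply Injective_map_NoDup; [| apply seq_NoDup].
    intros i j E; destruct (Nat.eq_dec i j); auto; exfalso; eapply Hk; eauto. }
  assert (Hincl : incl (map k (seq 0 (S M))) (seq 0 M)).
  { intros z (i & <- & _)%in_map_iff; apply in_seq.
    enough (k i < M) by lia; apply Nat.nle_gt; intro; apply Hbounded; eauto. }
  pose proof (NoDup_incl_length Hinj Hincl) as Hlen.
  rewrite length_map, !length_seq in Hlen; lia.
Qed.

Definition tile_max_str (str : nat -> nat) (t : tiletype) : nat :=
  Nat.max (Nat.max (str (gN t)) (str (gE t))) (Nat.max (str (gS t)) (str (gW t))).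

Definition max_glue_str (str : nat -> nat) (T : list tiletype) : nat :=
  list_max (map (tile_max_str str) T).

Section GlueBound.
Variables (str : nat -> nat) (T : list tiletype) (g : assembly).
Hypothesis tiles_in_T : forall p t, g p = Some t -> In t T.

Lemma edge_str_le p q : edge_str str g p q <= max_glue_str str T.
Proof.
  assert (Htile : forall t, In t T -> tile_max_str str t <= max_glue_str str T).
  { intros t Ht; unfold max_glue_str.
    pose proof (proj1 (list_max_le (map (tile_max_str str) T) _) (Nat.le_refl _)) as Hmax.
    rewrite Forall_forall in Hmax; apply Hmax, in_map, Ht. }
  unfold edge_str; destruct (g p) as [t |] eqn:Et, (g q); try lia.
  specialize (Htile t (tiles_in_T _ _ Et)); unfold tile_max_str in Htile.
  repeat match goal with |- context [if ?b then _ else _] => destruct b end; lia.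
Qed.

Lemma bond_str_le p q : bond_str str g p q <= 2 * max_glue_str str T.
Proof. unfold bond_str; pose proof (edge_str_le p q); pose proof (edge_str_le q p); lia. Qed.

Lemma cut_str_le_crossing (Da Db W : list pos) :
  NoDup Da -> NoDup Db ->
  (forall p q, In p Da -> In q Db -> bonded str g p q -> In p W /\ q = east p) ->
  cut_str str g Da Db <= length W * (2 * max_glue_str str T).
Proof.
  intros HDa HDb Hcross; unfold cut_str.
  apply (list_sum_le_support pos_eq_dec); auto.
  - intros p Hp; rewrite <- (Nat.mul_1_l (2 * _)); change 1 with (length [east p]).
    apply (list_sum_le_support pos_eq_dec); auto using bond_str_le.
    intros q Hq Hb; left; symmetry; apply (Hcross p q); auto; unfold bonded; lia.
  - intros p Hp Hsum; destruct (list_sum_pos (bond_str str g p) Db) as (q & Hq & Hb);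
      [now apply Nat.neq_0_lt_0 |].
    now apply (Hcross p q).
Qed.

End GlueBound.

Definition decide (P : Prop) : bool := if excluded_middle_informative P then true else false.

Lemma decide_true (P : Prop) : decide P = true <-> P.
Proof. unfold decide; destruct (excluded_middle_informative P); split; auto; discriminate. Qed.

Definition filter_prop (P : pos -> Prop) (l : list pos) : list pos :=
  filter (fun p => decide (P p)) l.

Lemma In_filter_prop P l p : In p (filter_prop P l) <-> In p l /\ P p.
Proof. unfold filter_prop; now rewrite filter_In, decide_true. Qed.

Lemma NoDup_filter_prop P l : NoDup l -> NoDup (filter_prop P l).
Proof. apply NoDup_filter. Qed.

Definition restrict (g : assembly) (P : pos -> Prop) : assembly :=
  fun p => if decide (P p) then g p else None.

Lemma restrict_in g (P : pos -> Prop) p : P p -> restrict g P p = g p.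
Proof. intro H; unfold restrict; now rewrite (proj2 (decide_true _) H). Qed.

Lemma restrict_out g (P : pos -> Prop) p : ~ P p -> restrict g P p = None.
Proof.
  intro H; unfold restrict; destruct (decide (P p)) eqn:E; auto.
  exfalso; apply H, decide_true, E.
Qed.

Lemma restrict_dom g P p : restrict g P p <> None <-> g p <> None /\ P p.
Proof.
  destruct (classic (P p)) as [H | H].
  - rewrite restrict_in; tauto.
  - rewrite restrict_out; tauto.
Qed.

Lemma dom_list_restrict g V P : dom_list g V -> dom_list (restrict g P) (filter_prop P V).
Proof.
  intros [HV Hdom]; split; [now apply NoDup_filter_prop |].
  intro p; rewrite In_filter_prop, Hdom, restrict_dom; tauto.
Qed.

Lemma restrict_split g (P : pos -> Prop) :
  disjoint (restrict g (fun p => ~ P p)) (restrict g P) /\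
  is_union (restrict g (fun p => ~ P p)) (restrict g P) g.
Proof.
  split; intro p; destruct (classic (P p)) as [H | H].
  - left; apply restrict_out; tauto.
  - right; now apply restrict_out.
  - now rewrite restrict_out, restrict_in by tauto.
  - rewrite restrict_in, (restrict_out g P) by tauto; now destruct (g p).
Qed.

Section Regions.
Variables (str : nat -> nat) (g : assembly).

Definition reach_within (S : pos -> Prop) : relation pos :=
  clos_refl_trans pos (fun p q => S p /\ S q /\ bonded str g p q).

Definition component (S : pos -> Prop) (w p : pos) : Prop := S w /\ reach_within S w p.

Lemma reach_within_sym S p q : reach_within S p q -> reach_within S q p.
Proof. apply clos_rt_sym; intros x y (? & ? & ?); auto using bonded_sym. Qed.

Lemma reach_within_mem S p q : reach_within S p q -> S p -> S q.
Proof. intros H; induction H as [x y (? & ? & ?) | | ]; auto. Qed.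

Lemma reach_within_step S p q r :
  reach_within S p q -> S r -> bonded str g q r -> S p -> reach_within S p r.
Proof.
  intros Hpq Hr Hb Hp; eapply rt_trans; [exact Hpq |].
  apply rt_step; repeat split; auto; now apply (reach_within_mem S p q).
Qed.

Lemma reach_within_restrict (S S' : pos -> Prop) u z :
  reach_within S u z -> S' u ->
  (forall w, reach_within S u w -> S w -> S' w) -> reach_within S' u z.
Proof.
  intros H Hu Hsub; apply clos_rt_rtn1 in H.
  induction H as [| y z (Hy & Hz & Hb) Hy' IH]; [apply rt_refl |].
  apply clos_rtn1_rt in Hy'.
  eapply rt_trans; [exact IH | apply rt_step; repeat split; auto].
  apply Hsub; auto; eapply rt_trans; [exact Hy' | now apply rt_step].
Qed.

Lemma component_mem S w p : component S w p -> S p.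
Proof. intros [Hw H]; now apply (reach_within_mem S w p). Qed.

Lemma component_reach S w p q :
  component S w p -> component S w q -> reach_within (component S w) p q.
Proof.
  assert (Hfrom : forall p, component S w p -> reach_within (component S w) w p).
  { intros x [Hw Hx]; apply reach_within_restrict with S; auto.
    - split; auto; apply rt_refl.
    - intros y Hy _; now split. }
  intros Hp Hq; eapply rt_trans; [apply reach_within_sym, Hfrom, Hp | apply Hfrom, Hq].
Qed.

Lemma exists_exit_edge (S : pos -> Prop) u t :
  connected str g -> S u -> g u <> None -> g t <> None -> ~ S t ->
  exists z w, reach_within S u z /\ S z /\ ~ S w /\ bonded str g z w.
Proof.
  intros Hconn Hu Hgu Hgt Ht.
  destruct (clos_rt_exit _ (reach_within S u) _ _ (Hconn u t Hgu Hgt)) as (z & w & Hz & Hw & Hb).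
  - apply rt_refl.
  - intro Hut; now apply Ht, (reach_within_mem S u).
  - assert (Hz' : S z) by now apply (reach_within_mem S u z).
    exists z, w; repeat split; auto.
    intro Hsw; apply Hw; now apply reach_within_step with z.
Qed.

(* A walk from [u] to [r] leaves the [B]-component of [u] through an edge into [A];
   that component is disjoint from [K], and [A] reaches [r] inside itself. *)
Lemma reach_outside_component (A : pos -> Prop) r w0 u :
  let B := fun p => g p <> None /\ ~ A p in
  let K := component B w0 in
  connected str g -> A r -> (forall p, A p -> g p <> None) ->
  (forall p, A p -> reach_within A p r) ->
  g u <> None -> ~ K u -> reach_within (fun p => ~ K p) u r.
Proof.
  intros B K Hconn Hr HAdom HAr Hu HKu.
  assert (HAK : forall p, A p -> ~ K p)
    by (intros p Hp HKp; now apply component_mem in HKp as [_ []]).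
  assert (Hfrom_A : forall p, A p -> reach_within (fun p => ~ K p) p r).
  { intros p Hp; refine (clos_rt_mono _ _ _ _ _ (HAr p Hp)).
    intros x y (Hx & Hy & Hb); repeat split; auto. }
  destruct (classic (A u)) as [HAu | HAu]; [auto |].
  destruct (exists_exit_edge B u r) as (z & w & Hz & HBz & HBw & Hb);
    [easy | now split | easy | now apply HAdom | now intros [_ []] |].
  assert (HAw : A w)
    by (apply NNPP; intro; apply HBw; split; auto; apply (bonded_dom str g z w Hb)).
  assert (Hout : forall p, reach_within B u p -> ~ K p).
  { intros p Hp [HBw0 Hw0p]; apply HKu; split; auto.
    eapply rt_trans; [exact Hw0p | now apply reach_within_sym]. }
  apply rt_trans with z.
  - apply reach_within_restrict with B; auto.
  - apply rt_trans with w; [| now apply Hfrom_A].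
    apply rt_step; repeat split; auto.
Qed.

Lemma connected_restrict (P : pos -> Prop) :
  (forall p q, P p -> P q -> g p <> None -> g q <> None -> reach_within P p q) ->
  connected str (restrict g P).
Proof.
  intros Hreach p q [Hp HPp]%restrict_dom [Hq HPq]%restrict_dom.
  refine (clos_rt_mono _ _ _ _ _ (Hreach p q HPp HPq Hp Hq)).
  intros x y (Hx & Hy & Hb); unfold bonded in *.
  now rewrite (bond_str_ext str _ g x y) by now apply restrict_in.
Qed.

End Regions.

Lemma union_left a b g p : is_union a b g -> a p <> None -> g p = a p.
Proof. intros H Hp; rewrite H; now destruct (a p). Qed.

Lemma union_right a b g p : disjoint a b -> is_union a b g -> b p <> None -> g p = b p.
Proof. intros Hd H Hp; rewrite H; now destruct (Hd p) as [-> | ?]. Qed.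

Lemma union_dom a b g p : is_union a b g -> g p <> None -> a p <> None \/ b p <> None.
Proof. intros H; rewrite H; destruct (a p); auto. Qed.

Lemma clos_rt_bonded_extend str a g :
  (forall p, a p <> None -> g p = a p) ->
  forall p q, clos_refl_trans pos (bonded str a) p q -> clos_refl_trans pos (bonded str g) p q.
Proof.
  intros Hext; apply clos_rt_mono; intros p q Hb; unfold bonded in *.
  destruct (bonded_dom str a p q Hb); now rewrite (bond_str_ext str g a) by auto.
Qed.

Lemma cut_str_pos str g Da Db : 0 < cut_str str g Da Db ->
  exists p q, In p Da /\ In q Db /\ bonded str g p q.
Proof.
  unfold cut_str; intros (p & Hp & Hsum)%list_sum_pos.
  destruct (list_sum_pos (bond_str str g p) Db) as (q & Hq & Hb); [exact Hsum |].
  now exists p, q.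
Qed.

Section Producible.
Variables (str : nat -> nat) (T : list tiletype) (tau : nat -> nat).

Lemma producible_nonempty a : producible str T tau a -> exists p, a p <> None.
Proof.
  induction 1 as [t p0 a _ Ha | a v b _ [p Hp] Hv | a b g _ [p Hp] _ _ [_ [Hu _]]
                 | g a b _ _ (_ & _ & _ & _ & Da & Db & [_ HDa] & _ & HDa0 & _)
                 | g a b _ _ (_ & _ & _ & _ & Da & Db & _ & [_ HDb] & _ & HDb0 & _)].
  - exists p0; rewrite Ha, (proj2 (pos_eqb_eq p0 p0) eq_refl); discriminate.
  - exists (pos_add p v); now rewrite (translate_add a v b).
  - exists p; now rewrite (union_left a b g p).
  - destruct Da as [| p]; [easy |]; exists p; apply HDa; now left.
  - destruct Db as [| p]; [easy |]; exists p; apply HDb; now left.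
Qed.

Lemma producible_tiles a : producible str T tau a -> forall p t, a p = Some t -> In t T.
Proof.
  induction 1 as [t0 p0 a HT Ha | a v b _ IH Hv | a b g _ IHa _ IHb [Hd [Hu _]]
                 | g a b _ IH [Hd [Hu _]] | g a b _ IH [Hd [Hu _]]]; intros p t Hp.
  - rewrite Ha in Hp; destruct (pos_eqb p p0); now inversion Hp; subst.
  - rewrite Hv in Hp; eauto.
  - rewrite Hu in Hp; destruct (a p) eqn:E; [inversion Hp; subst |]; eauto.
  - apply (IH p); rewrite (union_left a b g p Hu); congruence.
  - apply (IH p); rewrite (union_right a b g p Hd Hu); congruence.
Qed.

(* With [tau 1 > 0] every combination step uses a bond. *)
Lemma producible_connected a :
  nondecreasing tau -> 0 < tau 1 -> producible str T tau a -> connected str a.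
Proof.
  intros Hmono Htau1.
  induction 1 as [t p0 a _ Ha | a v b _ IH Hv
                 | a b g Ha IHa Hb IHb [Hd [Hu (Da & Db & HDa & HDb & Hcut)]]
                 | g a b _ _ (_ & _ & Hconn & _) | g a b _ _ (_ & _ & _ & Hconn & _)];
    auto.
  - intros p q Hp Hq; rewrite Ha in Hp, Hq.
    destruct (pos_eqb p p0) eqn:Ep, (pos_eqb q p0) eqn:Eq; try congruence.
    apply pos_eqb_eq in Ep, Eq; subst; apply rt_refl.
  - eapply connected_translate; eauto.
  - destruct (producible_nonempty a Ha) as [pa Hpa], (producible_nonempty b Hb) as [pb Hpb].
    assert (Hmin : 1 <= Nat.min (length Da) (length Db)).
    { destruct Da as [| ? Da]; [now apply HDa in Hpa |].
      destruct Db as [| ? Db]; [now apply HDb in Hpb |].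
      simpl; lia. }
    pose proof (Hmono _ _ Hmin).
    destruct (cut_str_pos str g Da Db) as (p & q & Hp & Hq & Hpq); [lia |].
    apply HDa in Hp; apply HDb in Hq.
    assert (Hto_p : forall u, g u <> None -> clos_refl_trans pos (bonded str g) u p).
    { intros u [Hau | Hbu]%(union_dom a b g u Hu).
      - apply (clos_rt_bonded_extend str a); auto.
        intros; now apply (union_left a b g).
      - apply rt_trans with q; [| apply rt_step, bonded_sym, Hpq].
        apply (clos_rt_bonded_extend str b); auto.
        intros; now apply (union_right a b g). }
    intros u w Hgu Hgw; apply rt_trans with p; [auto |].
    apply (clos_rt_sym _ (bonded_sym str g)); auto.
Qed.

End Producible.

Definition column (x y : Z) (a h : nat) : list pos :=
  map (fun b => (x + Z.of_nat a, y + Z.of_nat b)%Z) (seq 1 h).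

Definition rect_list (x y : Z) (w h : nat) : list pos :=
  flat_map (fun a => column x y a h) (seq 1 w).

Lemma In_column x y a h p :
  In p (column x y a h) <-> (fst p = x + Z.of_nat a /\ y + 1 <= snd p <= y + Z.of_nat h)%Z.
Proof.
  unfold column; rewrite in_map_iff; split.
  - intros (b & <- & Hb%in_seq); simpl; lia.
  - destruct p as [p1 p2]; simpl; intros [-> Hb].
    exists (Z.to_nat (p2 - y)); rewrite in_seq; split; [f_equal |]; lia.
Qed.

Lemma length_column x y a h : length (column x y a h) = h.
Proof. unfold column; now rewrite length_map, length_seq. Qed.

Lemma NoDup_column x y a h : NoDup (column x y a h).
Proof.
  apply Injective_map_NoDup; [| apply seq_NoDup].
  intros b1 b2 [= E]; lia.
Qed.

Lemma In_rect_list x y w h p : In p (rect_list x y w h) <-> rect x y w h p.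
Proof.
  unfold rect_list, rect; rewrite in_flat_map; split.
  - intros (a & Ha%in_seq & Hp%In_column); lia.
  - intros H; exists (Z.to_nat (fst p - x)); rewrite in_seq, In_column; lia.
Qed.

Lemma length_rect_list x y w h : length (rect_list x y w h) = w * h.
Proof.
  unfold rect_list; rewrite (flat_map_constant_length (c := h)), length_seq; auto.
  intros; apply length_column.
Qed.

Lemma NoDup_rect_list x y w h : NoDup (rect_list x y w h).
Proof.
  unfold rect_list; generalize (seq_NoDup w 1); generalize (seq 1 w) as l.
  induction l as [| a l IH]; simpl; intro Hl; [constructor |].
  inversion Hl; subst; apply NoDup_app; auto using NoDup_column.
  intros p Hp%In_column (a' & Ha' & Hp'%In_column)%in_flat_map.
  replace a' with a in Ha' by lia; auto.
Qed.

Lemma dom_list_rect (g : assembly) x y w h :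
  (forall p, g p <> None <-> rect x y w h p) -> dom_list g (rect_list x y w h).
Proof.
  intros H; split; [apply NoDup_rect_list |].
  intro p; rewrite In_rect_list, H; tauto.
Qed.

Section Breaking.
Variables (str : nat -> nat) (g : assembly) (V : list pos).
Hypotheses (g_connected : connected str g) (g_dom : dom_list g V).

(* Every point of [C] lies in the [S]-component of the inner end of an edge leaving
   [S], and such ends lie in [W]; so [|W|] components cover [C]. *)
Lemma large_component (S : pos -> Prop) (C W : list pos) t n :
  NoDup C -> (forall s, In s C -> S s /\ g s <> None) ->
  g t <> None -> ~ S t ->
  (forall z u, S z -> ~ S u -> bonded str g z u -> In z W) ->
  length W * n < length C ->
  exists w, S w /\ n < length (filter_prop (component str g S w) V).
Proof.
  intros HC HCS Ht HSt Hexit Hlen.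
  destruct (pigeonhole C W (fun w => filter_prop (component str g S w) V) n HC)
    as (w & _ & Hw); auto.
  - intros s Hs; destruct (HCS s Hs) as [HSs Hgs].
    destruct (exists_exit_edge str g S s t) as (z & u & Hz & HSz & HSu & Hb); auto.
    exists z; split; [eauto |].
    apply In_filter_prop; split; [now apply g_dom |].
    split; auto; now apply reach_within_sym.
  - exists w; split; auto.
    destruct (filter_prop _ V) as [| p l] eqn:E; [simpl in Hw; lia |].
    assert (Hp : In p (filter_prop (component str g S w) V)) by (rewrite E; now left).
    now apply In_filter_prop in Hp as [_ [Hw' _]].
Qed.

Lemma break_off_component T tau (A : pos -> Prop) r w0 (W : list pos) n :
  let K := component str g (fun p => g p <> None /\ ~ A p) w0 in
  nondecreasing tau -> (forall p t, g p = Some t -> In t T) ->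
  A r -> (forall p, A p -> g p <> None) -> (forall p, A p -> reach_within str g A p r) ->
  n < length (filter_prop A V) -> n < length (filter_prop K V) ->
  (forall p q, ~ K p -> K q -> bonded str g p q -> In p W /\ q = east p) ->
  length W * (2 * max_glue_str str T) < tau n ->
  exists a b, can_break str tau g a b.
Proof.
  intros K Hmono HT Hr HAdom HAr HA HK Hcross Hbound.
  destruct (restrict_split g K) as [Hdisj Hunion].
  set (Da := filter_prop (fun p => ~ K p) V).
  set (Db := filter_prop K V).
  assert (HDa : n < length Da).
  { eapply Nat.lt_le_trans; [exact HA |].
    apply NoDup_incl_length; [now apply NoDup_filter_prop, g_dom |].
    intros p [HpV HAp]%In_filter_prop; apply In_filter_prop; split; auto.
    now intros [_ []]%component_mem. }
  assert (Hnonempty : forall l : list pos, n < length l -> l <> [])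
    by (intros [|] Hl; [simpl in Hl; lia | discriminate]).
  exists (restrict g (fun p => ~ K p)), (restrict g K).
  split; [| split; [| split; [| split]]]; auto.
  - apply connected_restrict; intros p q HKp HKq Hp Hq.
    apply rt_trans with r; [| apply reach_within_sym]; now apply reach_outside_component.
  - apply connected_restrict; intros; now apply component_reach.
  - exists Da, Db.
    split; [now apply dom_list_restrict | split; [now apply dom_list_restrict |]].
    split; [now apply Hnonempty | split; [now apply Hnonempty |]].
    assert (Hcut : cut_str str g Da Db <= length W * (2 * max_glue_str str T)).
    { destruct g_dom as [HV _].
      apply cut_str_le_crossing; [exact HT | now apply NoDup_filter_prop .. |].
      intros p q [_ Hp]%In_filter_prop [_ Hq]%In_filter_prop; auto. }
    enough (tau n <= tau (Nat.min (length Da) (length Db))) by lia.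
    apply Hmono; unfold Db; lia.
Qed.

End Breaking.

Lemma bonded_leaving_left_block str g x y w h j :
  (forall p, g p <> None <-> rect x y w h p) -> forall p q,
  rect x y j h p -> g q <> None -> ~ rect x y j h q -> bonded str g p q ->
  In p (column x y j h) /\ q = east p.
Proof.
  intros Hdom p q Hp Hq%Hdom HLq Hb; unfold rect in *.
  destruct (bonded_cross str g p q (x + Z.of_nat j)) as [Hpx ->]; [auto | lia |].
  split; auto; apply In_column; lia.
Qed.

Lemma rectangle_breaks str T tau g x y w h n :
  nondecreasing tau -> (forall p t, g p = Some t -> In t T) -> connected str g ->
  (forall p, g p <> None <-> rect x y w h p) -> 1 <= h -> 2 * n + 2 <= w ->
  h * (2 * max_glue_str str T) < tau n ->
  exists a b, can_break str tau g a b.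
Proof.
  intros Hmono HT Hconn Hdom Hh Hw Hbound.
  set (j := S n).
  assert (HV : dom_list g (rect_list x y w h)) by now apply dom_list_rect.
  set (L := rect x y j h).
  pose proof (bonded_leaving_left_block str g x y w h j Hdom) as Hcross.
  destruct (large_component str g _ Hconn HV L (rect_list x y j h) (column x y j h)
              (x + Z.of_nat w, y + 1)%Z n) as (r & Hr & HA).
  - apply NoDup_rect_list.
  - intros s Hs%In_rect_list; split; [auto | apply Hdom; unfold L, rect in *; lia].
  - apply Hdom; unfold rect; simpl; lia.
  - unfold L, rect; simpl; lia.
  - intros z u Hz Hu Hb; apply (Hcross z u Hz (proj2 (bonded_dom str g z u Hb)) Hu Hb).
  - rewrite length_column, length_rect_list; unfold j; nia.
  - set (A := component str g L r).
    set (B := fun p => g p <> None /\ ~ A p).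
    assert (HAr : A r) by (split; [auto | apply rt_refl]).
    assert (HAdom : forall p, A p -> g p <> None)
      by (intros p Hp%component_mem; apply Hdom; unfold L, rect in *; lia).
    assert (Hjoin : forall p q, A p -> B q -> bonded str g p q -> ~ L q).
    { intros p q [_ Hp] [_ HAq] Hb HLq; apply HAq; split; auto.
      now apply reach_within_step with p. }
    destruct (large_component str g _ Hconn HV B (rect_list (x + Z.of_nat j) y (w - j) h)
                (column x y (S j) h) r n) as (w0 & Hw0 & HK).
    + apply NoDup_rect_list.
    + intros s Hs%In_rect_list; unfold rect in Hs.
      assert (Hgs : g s <> None) by (apply Hdom; unfold rect; lia).
      repeat split; auto; intros HLs%component_mem; unfold L, rect in HLs; lia.
    + auto.
    + now intros [_ []].
    + intros z u [Hgz HAz] HBu Hb.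
      assert (HAu : A u)
        by (apply NNPP; intro; apply HBu; split; auto; apply (bonded_dom str g z u Hb)).
      destruct (Hcross u z) as [Hu ->]; auto using bonded_sym.
      * now apply component_mem in HAu.
      * apply (Hjoin u z); auto using bonded_sym; now split.
      * apply In_column in Hu; apply In_column; unfold east; simpl; lia.
    + rewrite length_column, length_rect_list; unfold j in *; nia.
    + apply (break_off_component str g _ Hconn HV T tau A r w0 (column x y j h) n); auto.
      * intros p Hp; apply reach_within_sym; now apply component_reach.
      * intros p q HKp HKq Hb.
        assert (HAp : A p).
        { apply NNPP; intro HAp; apply HKp; destruct HKq as [HBw0 Hq]; split; auto.
          apply reach_within_step with q; auto using bonded_sym.
          split; auto; apply (bonded_dom str g p q Hb). }
        apply Hcross; auto.
        -- now apply component_mem in HAp.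
        -- apply (bonded_dom str g p q Hb).
        -- apply (Hjoin p q); auto; now apply component_mem in HKq.
      * now rewrite length_column.
Qed.

Section Terminal.
Variables (str : nat -> nat) (T : list tiletype) (tau : nat -> nat).

Lemma terminal_translate g v g' :
  terminal str T tau g -> translate g v g' -> terminal str T tau g'.
Proof.
  intros (Hprod & Hcomb & Hbreak) Hv; split; [| split].
  - now apply P_trans with g v.
  - intros u a Hu; apply (Hcomb (pos_add v u)); now apply translate_compose with g'.
  - intros u a Hu; apply (Hbreak (pos_add v u)); now apply translate_compose with g'.
Qed.

Lemma terminal_no_break g a b : terminal str T tau g -> ~ can_break str tau g a b.
Proof. intros (_ & _ & Hbreak); apply (Hbreak _ g (translate_zero g)). Qed.

(* Otherwise a single tile could attach at the free position [p0] with a cut of strength 0. *)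
Lemma terminal_tau1_pos g D p0 :
  nondecreasing tau -> terminal str T tau g -> dom_list g D -> g p0 = None -> 0 < tau 1.
Proof.
  intros Hmono Hterm HD Hp0.
  destruct Hterm as (Hprod & Hcomb & _).
  destruct (producible_nonempty _ _ _ _ Hprod) as [p Hp].
  destruct (g p) as [t |] eqn:Et; [| easy].
  set (b := fun q => if pos_eqb q p0 then Some t else None).
  assert (Hb : producible str T tau b)
    by exact (P_tile _ _ _ t p0 b (producible_tiles _ _ _ _ Hprod _ _ Et) (fun q => eq_refl)).
  apply Nat.neq_0_lt_0; intro Htau1.
  apply (Hcomb _ g (translate_zero g) b Hb
           (fun q => match g q with Some u => Some u | None => b q end)).
  split; [| split; [intro; reflexivity |]].
  - intro q; unfold b; destruct (pos_eqb q p0) eqn:E; auto.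
    left; apply pos_eqb_eq in E; now subst.
  - exists D, [p0]; split; [exact HD | split].
    + split; [repeat constructor; auto |].
      intro q; unfold b; simpl; destruct (pos_eqb q p0) eqn:E.
      * apply pos_eqb_eq in E; subst; split; [discriminate | auto].
      * split; [| easy]; intros [<- | []].
        now rewrite (proj2 (pos_eqb_eq p0 p0) eq_refl) in E.
    + enough (tau (Nat.min (length D) (length [p0])) <= tau 1) by lia.
      apply Hmono; simpl; lia.
Qed.

End Terminal.

Theorem theorem2 (str : nat -> nat) (T : list tiletype) (c : nat)
  (tau : nat -> nat -> nat) (k h : nat -> nat) :
  (forall i, nondecreasing (tau i)) ->
  (forall i, self_assembles_rect str T (tau i) (k i) (h i)) ->
  (forall i, (h i <= c)%nat) ->
  (forall i j, i <> j -> k i <> k j) ->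
  exists C : nat, forall n f_n, is_min_value (fun i => tau i n) f_n -> (f_n <= C)%nat.
Proof.
  intros Hmono Hasm Hh Hk.
  exists (c * (2 * max_glue_str str T)).
  intros n f_n [_ Hmin].
  destruct (injective_unbounded k Hk (2 * n + 2)) as [i Hi].
  specialize (Hmin i); simpl in Hmin.
  apply Nat.nlt_ge; intro Hlarge.
  destruct (Hasm i) as (x & y & Hshape & g & Hterm).
  destruct (Hshape g Hterm) as (v & g' & Hv & Hdom).
  pose proof (terminal_translate _ _ _ _ _ _ Hterm Hv) as Hterm'.
  pose proof (proj1 Hterm') as Hprod.
  assert (Hh1 : 1 <= h i)
    by (destruct (producible_nonempty _ _ _ _ Hprod) as [p Hp%Hdom]; unfold rect in Hp; lia).
  assert (Hfree : g' (x, y)%Z = None)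
    by (apply NNPP; intros Hxy%Hdom; unfold rect in Hxy; simpl in Hxy; lia).
  assert (Hconn : connected str g').
  { apply (producible_connected str T (tau i)); auto.
    apply (terminal_tau1_pos str T (tau i) g' (rect_list x y (k i) (h i)) (x, y)%Z);
      auto using dom_list_rect. }
  destruct (rectangle_breaks str T (tau i) g' x y (k i) (h i) n (Hmono i)
              (producible_tiles _ _ _ _ Hprod) Hconn Hdom Hh1 Hi) as (a & b & Hbreak).
  { specialize (Hh i); nia. }
  exact (terminal_no_break _ _ _ _ _ _ Hterm' Hbreak).
Qed.
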